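(* Let $j\ge1$ and $s\ge0$ be integers and let $g=g_{j,s,1}$ be the sequence defined in the context (case $\lambda=1$). Then $g$ is non-decreasing, $g(n)\equiv 1 \pmod j$ for all $n\ge1$, and its frequency function $\phi(q)=\#\{n\ge1: g(n)=q\}$ satisfies, for every positive integer $q$, \[ \phi(q)=\begin{cases} q+s, & q\equiv 1 \pmod j,\\ 0, & \text{otherwise.}\end{cases} \] Equivalently, $g$ is the sequence $1^{s+1},(j+1)^{s+j+1},(2j+1)^{s+2j+1},\dots$, where $a^{b}$ denotes the value $a$ repeated $b$ times.
   Context: Fix integers $j\ge1$, $\lambda\ge1$, $s\ge0$. Define a labeled infinite rooted tree $\mathcal K$ as follows. It has ''supernodes'' $S_0,S_1,S_2,\dots$ with an edge between $S_i$ and $S_{i+1}$ for every $i\ge0$ ($S_0$ is the root). $S_0$ has two further children: the ''initial leaf'' and a node $N_0$, which is a leaf. For each $i\ge1$, $S_i$ has a child $N_i$ (the ''knot node''), and attached to $N_i$ are $\lambda$ chains, each a path of $i\cdot j$ nodes hanging from $N_i$; the last (bottom) node of each chain is a leaf. Each supernode carries $s$ labels and every other node carries exactly one label. The labels are the consecutive positive integers $1,2,3,\dots$, assigned in the following order: initial leaf, $S_0$, $N_0$; then for $i=1,2,3,\dots$: $S_i$ (its $s$ labels), $N_i$, then the nodes of the first chain of $N_i$ from top to bottom, then the second chain, ..., then the $\lambda$-th chain. The initial leaf has weight $1$; every other leaf of $\mathcal K$ (namely $N_0$ and the bottom node of each chain) has weight $j$. The leaf weight sequence $w(n)=w_{j,s,\lambda}(n)$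 ($n\ge1$) is the total weight of the leaves of $\mathcal K$ whose label is $\le n$. Explicitly, $w(n)=1+j\cdot\#\{\ell\in L:\ell\le n\}$, where $L$ consists of the number $s+2$ together with the numbers $L_{i,c}=s+2+\sum_{l=1}^{i-1}(s+1+\lambda l j)+s+1+c\,i\,j$ for $i\ge1$, $1\le c\le\lambda$. The sequence $g_{j,s,\lambda}$ is defined by $g_{j,s,\lambda}(n)=w_{j,s,\lambda}(n)$ for $1\le n\le 3+2s+\lambda j$ and $g_{j,s,\lambda}(n)=g_{j,s,\lambda}(n-s-g_{j,s,\lambda}(n-j))+\lambda j$ for $n>3+2s+\lambda j$ (this is well defined). In the case $\lambda=1$, $L=\{p_m: m\ge0\}$ with $p_m=1+\sum_{i=0}^{m}(s+ij+1)$. *)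

From mathcomp Require Import all_boot.
Set Implicit Arguments. Unset Strict Implicit. Unset Printing Implicit Defensive.

Definition Lic (j s lam i c : nat) : nat :=
  s + 2 + sumn [seq s + 1 + lam * l * j | l <- iota 1 i.-1] + (s + 1) + c * i * j.

(* w(n) = 1 + j * #{ l in L : l <= n }, L = {s+2} u {L_{i,c} : i>=1, 1<=c<=lam}.
   Since L_{i,c} > i for j >= 1, only indices i <= n can contribute. *)
Definition wseq (j s lam n : nat) : nat :=
  1 + j * ((s + 2 <= n) +
           sumn [seq sumn [seq nat_of_bool (Lic j s lam i c <= n) | c <- iota 1 lam]
                       | i <- iota 1 n]).

Definition look (t : seq nat) (k : nat) : nat :=
  if (1 <= k) && (k <= size t) then nth 0 t k.-1 else 0.

Fixpoint gtab (j s lam m : nat) : seq nat :=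
  match m with
  | 0 => [::]
  | m'.+1 =>
    let t := gtab j s lam m' in
    let n := m'.+1 in
    let v := if n <= 3 + 2 * s + lam * j then wseq j s lam n
             else look t (n - s - look t (n - j)) + lam * j in
    rcons t v
  end.

(* g_{j,s,lam}(n) for n >= 1.  The recursion only refers to earlier values
   (the paper notes the definition is well defined), so the default 0 used
   for out-of-range indices is never used. *)
Definition gseq (j s lam n : nat) : nat := look (gtab j s lam n) n.

Definition has_freq (f : nat -> nat) (q k : nat) : Prop :=
  exists N, (forall n, N < n -> f n <> q) /\
            count (fun n => f n == q) (iota 1 N) = k.

From mathcomp Require Import all_boot zify.

(* Cut the positive integers into consecutive blocks, block k starting at
   bstart k = 1 + sum_{i<k} (s + 1 + i j) and having length s + 1 + k j.
   1. Since the leaves of the tree K with labels >= 2 are exactly the block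
      starts bstart k (k >= 1), the leaf weight sequence w is 1 + j k on
      block k (w_block).
   2. For n in block k+2, n - j lies in block k+1 or k+2, and in both cases
      n - s - w(n - j) lies in block k+1 (lookback_block).  Hence the
      recursion defining g from position 4 + 2s + j on is satisfied by w,
      and g = w by strong induction (g_eq_w), so g is 1 + j k on block k.
   3. Monotonicity, the congruence g(n) = 1 (mod j) and the frequency count
      (block k has length (1 + j k) + s) are then read off the blocks. *)

Lemma count_iota_prefix (p : pred nat) m N a :
  m <= a <= m + N -> (forall i, m <= i < m + N -> p i = (i < a)) ->
  count p (iota m N) = a - m.
Proof.
move=> /andP [le_ma le_aN] pE.
have -> : N = (a - m) + (m + N - a) by lia.
rewrite iotaD count_cat (subnKC le_ma).
rewrite (@eq_in_count _ _ predT (iota m (a - m))); last first.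
  by move=> i; rewrite mem_iota => /andP [h1 h2]; rewrite pE /=; lia.
rewrite (@eq_in_count _ _ pred0 (iota a _)); last first.
  by move=> i; rewrite mem_iota => /andP [h1 h2]; rewrite pE /=; lia.
by rewrite count_predT count_pred0 size_iota addn0.
Qed.

Lemma congr1_rep {j q} : 0 < q -> q = 1 %[mod j] -> exists k, q = 1 + j * k.
Proof.
by move=> q_gt0 /eqP; rewrite eqn_mod_dvd // => /dvdnP [k hk]; exists k; lia.
Qed.

(* The table gtab m lists g(1), ..., g(m); every entry, once written, is
   never changed, so reading the table at k <= m gives gseq k. *)
Lemma gtab_size j s lam m : size (gtab j s lam m) = m.
Proof. by elim: m => [|m IH] //=; rewrite size_rcons IH. Qed.

Lemma look_rcons t v k : k <= size t -> look (rcons t v) k = look t k.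
Proof.
move=> hk; rewrite /look size_rcons.
by case: k hk => [//|k] hk /=; rewrite hk ltnW // nth_rcons hk.
Qed.

Lemma look_gtab j s lam m k :
  1 <= k <= m -> look (gtab j s lam m) k = gseq j s lam k.
Proof.
elim: m => [|m IH] /andP [k_gt0 le_km]; first by lia.
case: (ltnP k m.+1) => hk; last by have -> : k = m.+1 by lia.
by rewrite /= look_rcons ?gtab_size // IH ?k_gt0.
Qed.

Lemma gseqS j s lam m : gseq j s lam m.+1 =
  (if m.+1 <= 3 + 2 * s + lam * j then wseq j s lam m.+1
   else look (gtab j s lam m) (m.+1 - s - look (gtab j s lam m) (m.+1 - j))
        + lam * j).
Proof.
by rewrite /gseq /= /look size_rcons gtab_size leqnn /= nth_rcons gtab_size
  ltnn eqxx.
Qed.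

Section Blocks.
Context {j s : nat}.

Definition bstart k := 1 + sumn [seq s + 1 + i * j | i <- iota 0 k].

Definition in_block k n := bstart k <= n < bstart k.+1.

Lemma bstartS k : bstart k.+1 = bstart k + (s + 1 + k * j).
Proof. by rewrite /bstart -[k.+1]addn1 iotaD map_cat sumn_cat /= addn0 addnA. Qed.

Lemma bstart_mono : {mono bstart : a b / a <= b}.
Proof. by apply/leq_mono/(homo_ltn ltn_trans) => k; rewrite bstartS; lia. Qed.

Lemma bstart_gt k : k < bstart k.
Proof. by elim: k => [|k IH] //; rewrite bstartS; lia. Qed.

Lemma in_block_start k : in_block k (bstart k).
Proof. by rewrite /in_block leqnn bstartS; lia. Qed.

Lemma block_exists {n} : 1 <= n -> exists k, in_block k n.
Proof.
move=> n_gt0; have ex : exists k, n < bstart k by exists n; apply: bstart_gt.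
case: (ex_minnP ex) => [[|k] lt_nk kmin]; first by rewrite /bstart /= in lt_nk; lia.
exists k; rewrite /in_block lt_nk andbT leqNgt; apply/negP => /kmin; lia.
Qed.

Lemma bstart_le_block {k n} i : in_block k n -> (bstart i <= n) = (i <= k).
Proof.
move=> /andP [le_kn lt_nk]; case: (leqP i k) => hi.
  by apply: leq_trans le_kn; rewrite bstart_mono.
by apply/negbTE; rewrite -ltnNge; apply: leq_trans lt_nk _; rewrite bstart_mono.
Qed.

Lemma block_mono {a b n m} : in_block a n -> in_block b m -> n <= m -> a <= b.
Proof.
move=> na mb le_nm; rewrite -(bstart_le_block a mb).
by case/andP: na => h _; apply: leq_trans le_nm.
Qed.

Lemma in_block_pos {k n} : in_block k n -> 0 < n.
Proof. by case/andP=> h _; apply: leq_trans h; have := bstart_gt k; lia. Qed.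

Lemma Lic_bstart i : 1 <= i -> Lic j s 1 i 1 = bstart i.+1.
Proof.
case: i => [//|i] _; rewrite bstartS /Lic /bstart /=.
by under eq_map do rewrite mul1n; lia.
Qed.

Lemma w_block {k n} : in_block k n -> wseq j s 1 n = 1 + j * k.
Proof.
move=> nk; rewrite /wseq; congr (1 + j * _).
have -> : (s + 2 <= n) + sumn [seq sumn [seq nat_of_bool (Lic j s 1 i c <= n)
                                          | c <- iota 1 1] | i <- iota 1 n]
          = count (fun i => bstart i.+1 <= n) (iota 0 n.+1).
  rewrite -sumn_count /=; congr (nat_of_bool (_ <= n) + sumn _).
    by rewrite bstartS /bstart /=; lia.
  by apply/eq_in_map => i; rewrite mem_iota => /andP [i_gt0 _] /=;
    rewrite Lic_bstart // addn0.
rewrite (@count_iota_prefix _ 0 n.+1 k) ?subn0 //.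
  by case/andP: nk => h _; have := bstart_gt k; lia.
by move=> i _; rewrite (bstart_le_block _ nk).
Qed.

(* The remaining facts need j >= 1: for j = 0 all block values 1 + j k
   coincide. *)
Context (j_gt0 : 1 <= j).

Lemma lookback_block {k n a} :
  in_block k.+2 n -> in_block a (n - j) -> in_block k.+1 (n - s - (1 + j * a)).
Proof.
move=> nk na.
have ES := bstartS k.+1; have ET := bstartS k.+2.
have le_a : a <= k.+2 by apply: block_mono na nk (leq_subr _ _).
have ge_a : k.+1 <= a.
  apply: block_mono (in_block_start _) na _.
  by case/andP: nk => h _; rewrite ES in h; lia.
move: nk na; rewrite /in_block ET ES.
have [-> | ->] : a = k.+1 \/ a = k.+2 by lia.
all: rewrite ?ES !mulSn !mulnS [j * k]mulnC; lia.
Qed.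

Lemma g_eq_w n : 1 <= n -> gseq j s 1 n = wseq j s 1 n.
Proof.
elim/ltn_ind: n => [[|m]] IH // _.
rewrite gseqS; case: ifP => // /negbT; rewrite -ltnNge mul1n => big.
have [k nk] : exists k, in_block k.+2 m.+1.
  have [k' nk'] := @block_exists m.+1 isT.
  have : 2 <= k' by rewrite -(bstart_le_block 2 nk') !bstartS /bstart /=; lia.
  by case: k' nk' => [|[|k]] // nk _; exists k.
have [a na] : exists a, in_block a (m.+1 - j).
  by apply: block_exists; case/andP: nk; rewrite !bstartS; lia.
have target := lookback_block nk na.
have back_range : 1 <= m.+1 - j <= m by have := in_block_pos na; lia.
have target_range : 1 <= m.+1 - s - (1 + j * a) <= m.
  by have := in_block_pos target; case/andP: target nk; rewrite /in_block; lia.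
have g_back : gseq j s 1 (m.+1 - j) = 1 + j * a.
  by rewrite IH ?(w_block na) //; case/andP: back_range; lia.
have g_target : gseq j s 1 (m.+1 - s - (1 + j * a)) = 1 + j * k.+1.
  by rewrite IH ?(w_block target) //; case/andP: target_range; lia.
rewrite [look _ (m.+1 - j)]look_gtab // g_back look_gtab // g_target.
by rewrite (w_block nk) !mulnS; lia.
Qed.

Lemma g_block {k n} : in_block k n -> gseq j s 1 n = 1 + j * k.
Proof. by move=> nk; rewrite g_eq_w ?(in_block_pos nk) // (w_block nk). Qed.

Lemma g_block_eq {b n} k : in_block b n -> (gseq j s 1 n == 1 + j * k) = (b == k).
Proof. by move=> nb; rewrite (g_block nb) eqn_add2l eqn_pmul2l. Qed.

Lemma g_after_block k n : bstart k.+1 <= n -> gseq j s 1 n <> 1 + j * k.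
Proof.
move=> le_kn; have [b nb] : exists b, in_block b n.
  by apply: block_exists; have := bstart_gt k.+1; lia.
rewrite (bstart_le_block _ nb) in le_kn.
by move/eqP; rewrite (g_block_eq _ nb) => /eqP b_k; move: le_kn; rewrite b_k ltnn.
Qed.

Lemma g_count_value k :
  count (fun n => gseq j s 1 n == 1 + j * k) (iota 1 (bstart k.+1).-1)
  = s + 1 + k * j.
Proof.
have ES := bstartS k; have Pk := bstart_gt k.
rewrite (@eq_in_count _ _ (predC (fun n => n < bstart k))); last first.
  move=> n; rewrite mem_iota => /andP [n_gt0 lt_n].
  have [b nb] := block_exists n_gt0.
  have : ~~ (bstart k.+1 <= n) by rewrite -ltnNge; lia.
  rewrite (bstart_le_block _ nb) -ltnNge ltnS => le_bk.
  by rewrite (g_block_eq _ nb) /= -leqNgt (bstart_le_block _ nb) eqn_leq le_bk.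
have := count_predC (fun n => n < bstart k) (iota 1 (bstart k.+1).-1).
rewrite (@count_iota_prefix _ 1 _ (bstart k)) ?size_iota => [count_eq||]; try lia.
by apply/(@addnI (bstart k - 1)); rewrite count_eq ES; lia.
Qed.

End Blocks.

Theorem theorem4p1 (j s : nat) (hj : 1 <= j) :
  (forall n m, 1 <= n -> n <= m -> gseq j s 1 n <= gseq j s 1 m) /\
  (forall n, 1 <= n -> gseq j s 1 n = 1 %[mod j]) /\
  (forall q, 0 < q ->
     has_freq (gseq j s 1) q (if q == 1 %[mod j] then q + s else 0)).
Proof.
have g_mod n : 1 <= n -> gseq j s 1 n = 1 %[mod j].
  move=> n_gt0; have [k nk] := @block_exists j s _ n_gt0.
  by rewrite (g_block hj nk) addnC mulnC modnMDl.
split.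
  move=> n m n_gt0 le_nm; have [a na] := @block_exists j s _ n_gt0.
  have [b mb] := @block_exists j s _ (leq_trans n_gt0 le_nm).
  rewrite (g_block hj na) (g_block hj mb) leq_add2l leq_mul2l.
  by rewrite (block_mono na mb le_nm) orbT.
split=> // q q_gt0; case: ifP => [/eqP congr | not_congr].
  have [k ->] := congr1_rep q_gt0 congr.
  exists (@bstart j s k.+1).-1; split; last by rewrite (g_count_value hj); lia.
  by move=> n lt_n; apply: (g_after_block hj); lia.
exists 0; split=> // n n_gt0 gq.
by move: (g_mod n n_gt0); rewrite gq => /eqP; rewrite not_congr.
Qed.
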